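(* Assume $b,f,g$ are bounded and uniformly continuous in all variables. For a compact $K\subset\mathbb X$ and $\varepsilon>0$ let $\rho_K(\varepsilon):=\sup_{\theta\in K}d(\mathbb H_\varepsilon(\theta),\mathbb H(\theta))$. Then $\lim_{\varepsilon\to0}\rho_K(\varepsilon)=0$ if and only if $\mathbb H$ is (uniformly) continuous on $K$ with respect to $d$.
   Context: Fix integers $d,N\ge 1$ and $T>0$. For $i=1,\dots,N$, $A_i$ is a domain in some Euclidean space and $A:=A_1\times\cdots\times A_N$; $(a^{-i},\tilde a_i)$ denotes $a\in A$ with $i$-th component replaced by $\tilde a_i\in A_i$. Data: $b:[0,T]\times\mathbb R^d\times A\to\mathbb R^d$, $f:[0,T]\times\mathbb R^d\times A\to\mathbb R^N$, $g:\mathbb R^d\to\mathbb R^N$. Let $\mathbb X:=[0,T]\times\mathbb R^d\times\mathbb R^{dN}$, $\theta=(t,x,z)$, $z=(z^1,\dots,z^N)$, $z^i\in\mathbb R^d$, $\theta^i:=(t,x,z^i)$; $h_i(t,x,z^i,a):=f_i(t,x,a)+b(t,x,a)\cdot z^i$, $h(\theta,a):=(h_1(\theta^1,a),\dots,h_N(\theta^N,a))$. For $\varepsilon>0$, $\mathcal E_\varepsilon(\theta)$ is the set of $a\in A$ with $h_i(\theta^i,a)\ge h_i(\theta^i,(a^{-i},\tilde a_i))-\varepsilon$ for all $i$, $\tilde a_i\in A_i$; $\mathbb H_\varepsilon(\theta):=\{y\in\mathbb R^N:|y-h(\theta,a)|<\varepsilon$ for some $a\in\mathcal E_\varepsilon(\theta)\}$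 and $\mathbb H(\theta):=\bigcap_{\varepsilon>0}\mathbb H_\varepsilon(\theta)$. For sets $\mathbb H_1,\mathbb H_2\subset\mathbb R^N$, $d$ is the Hausdorff distance $d(\mathbb H_1,\mathbb H_2)=[\sup_{y_1\in\mathbb H_1}d(y_1,\mathbb H_2)]\vee[\sup_{y_2\in\mathbb H_2}d(y_2,\mathbb H_1)]$, $d(y,\mathbb H'):=\inf_{y'\in\mathbb H'}|y-y'|$. *)

From HB Require Import structures.
From mathcomp Require Import all_boot all_order all_algebra.
From mathcomp Require Import all_classical all_reals all_analysis.
Unset Printing Implicit Defensive.
Import Order.TTheory GRing.Theory Num.Theory.
Import numFieldNormedType.Exports.
Local Open Scope classical_set_scope.
Local Open Scope ring_scope.

Section Game.
Variables (R : realType) (d N : nat) (T : R) (k : 'I_N -> nat).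

Definition profile := forall i : 'I_N, 'rV[R]_(k i).

(* states theta = (t, x, z) with z the N x d matrix whose i-th row is z^i *)
Definition state := (R * 'rV[R]_d * 'M[R]_(N, d))%type.

Definition Xset : set state := [set th | 0 <= th.1.1 <= T].

Definition in_A (A : forall i : 'I_N, set 'rV[R]_(k i)) (a : profile) :=
  forall i, A i (a i).

Definition enorm {n} (v : 'rV[R]_n) : R := Num.sqrt (\sum_(j < n) v 0 j ^+ 2).

Definition repl (a : profile) {i : 'I_N} (ai : 'rV[R]_(k i)) : profile :=
  @dfwith _ (fun j => 'rV[R]_(k j)) a i ai.


Variables (b : R -> 'rV[R]_d -> profile -> 'rV[R]_d)
          (f : R -> 'rV[R]_d -> profile -> 'rV[R]_N).

Definition hi (i : 'I_N) (th : state) (a : profile) : R :=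
  f th.1.1 th.1.2 a 0 i + \sum_(j < d) b th.1.1 th.1.2 a 0 j * th.2 i j.

Definition hvec (th : state) (a : profile) : 'rV[R]_N := \row_i hi i th a.

Variable A : forall i : 'I_N, set 'rV[R]_(k i).

Definition Eeps (eps : R) (th : state) : set profile :=
  [set a | in_A A a /\
    forall i (ai : 'rV[R]_(k i)), A i ai ->
      hi i th (repl a ai) - eps <= hi i th a].

Definition Heps (eps : R) (th : state) : set 'rV[R]_N :=
  [set y | exists2 a, Eeps eps th a & enorm (y - hvec th a) < eps].

Definition Hset (th : state) : set 'rV[R]_N :=
  [set y | forall eps, 0 < eps -> Heps eps th y].

End Game.
Arguments profile {R N} k.
Arguments enorm {R n} v.
Arguments in_A {R N k} A a.
Arguments repl {R N k} a {i} ai.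
Arguments hi {R d N k} b f i th a.
Arguments hvec {R d N k} b f th a.
Arguments Eeps {R d N k} b f A eps th.
Arguments Heps {R d N k} b f A eps th.
Arguments Hset {R d N k} b f A th.
Arguments Xset {R} d N T.

Section Hausdorff.
Variables (R : realType) (n : nat).
Local Open Scope ereal_scope.

(* d(y, H') = inf_{y' in H'} |y - y'|   (= +oo if H' is empty) *)
Definition dist_pt (y : 'rV[R]_n) (S : set 'rV[R]_n) : \bar R :=
  ereal_inf [set (enorm (y - y'))%:E | y' in S].

(* Hausdorff distance; sups of nonnegative quantities, sup of empty set := 0 *)
Definition hausdorff (S1 S2 : set 'rV[R]_n) : \bar R :=
  maxe (ereal_sup ([set 0] `|` [set dist_pt y S2 | y in S1]))
       (ereal_sup ([set 0] `|` [set dist_pt y S1 | y in S2])).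
End Hausdorff.
Arguments dist_pt {R n} y S.
Arguments hausdorff {R n} S1 S2.

Definition rhoK {R : realType} {d N} {k : 'I_N -> nat}
  (b : R -> 'rV[R]_d -> profile k -> 'rV[R]_d)
  (f : R -> 'rV[R]_d -> profile k -> 'rV[R]_N)
  (A : forall i : 'I_N, set 'rV[R]_(k i)) (K : set (state R d N)) (eps : R)
  : \bar R :=
  ereal_sup ([set 0%E] `|` [set hausdorff (Heps b f A eps th) (Hset b f A th)
                            | th in K]).

Definition bounded_on_dom {R : realType} {d N} {k : 'I_N -> nat} (T : R)
  (A : forall i : 'I_N, set 'rV[R]_(k i)) {V : normedModType R}
  (F : R -> 'rV[R]_d -> profile k -> V) :=
  exists M : R, forall t x a, 0 <= t <= T -> in_A A a -> `|F t x a| <= M.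

Definition unif_cont_on_dom {R : realType} {d N} {k : 'I_N -> nat} (T : R)
  (A : forall i : 'I_N, set 'rV[R]_(k i)) {V : normedModType R}
  (F : R -> 'rV[R]_d -> profile k -> V) :=
  forall e : R, 0 < e -> exists2 del : R, 0 < del &
    forall t t' x x' (a a' : profile k),
      0 <= t <= T -> 0 <= t' <= T -> in_A A a -> in_A A a' ->
      `|t - t'| < del -> `|x - x'| < del -> (forall i, `|a i - a' i| < del) ->
      `|F t x a - F t' x' a'| < e.

Definition Hd_unif_cont_on {R : realType} {d N} (G : state R d N -> set 'rV[R]_N)
  (K : set (state R d N)) :=
  forall e : R, 0 < e -> exists2 del : R, 0 < del &
    forall th th', K th -> K th' -> ball th del th' ->
      (hausdorff (G th) (G th') < e%:E)%E.

(* Two uniform estimates drive both directions.  First, on a compact K the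
   z-component is bounded, so boundedness and uniform continuity of b and f
   make h(th, a) and h(th', a) uniformly close in a whenever th and th' are
   close; then H_eps(th) lies in H_(eps + 2 eta)(th'), in particular H(th) lies
   in H_(3 eta)(th').  Second, for fixed th the sets H_eps(th) decrease as
   eps -> 0, are bounded, and the eps-neighbourhood of H_eps(th) lies in
   H_(2 eps)(th), so their intersection H(th) is closed and a cluster point
   argument shows that H_eps(th) is eventually inside any neighbourhood of H(th).
   If rho_K(eps) -> 0, the first estimate gives H(th) within rho_K(3 eta) of
   H(th'), i.e. uniform continuity.  Conversely, if the convergence were not
   uniform on K, a cluster point p of states with bad H_eps would contradict the
   second estimate at p, transported to nearby states by the first estimate and
   by the uniform continuity of H. *)

From Pilot Require Import Defs.
From HB Require Import structures.
From mathcomp Require Import all_boot all_order all_algebra.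
From mathcomp Require Import all_classical all_reals all_analysis.
From mathcomp Require Import ring lra.
Import Order.TTheory GRing.Theory Num.Theory.
Import numFieldNormedType.Exports.
Local Open Scope classical_set_scope.
Local Open Scope ring_scope.

Section EuclideanNorm.
Context {R : realType}.

Lemma mxentry_norm_le {m n} (M : 'M[R]_(m, n)) i j : `|M i j| <= `|M|.
Proof.
change (`|M i j| <= mx_norm M); rewrite mx_normrE.
by apply/bigmax_geP; right; exists (i, j).
Qed.

Lemma sum_sqr_ge0 n (w : 'I_n -> R) : 0 <= \sum_i w i ^+ 2.
Proof. by apply: sumr_ge0 => i _; exact: sqr_ge0. Qed.

Lemma cauchy_schwarz_sum n (u v : 'I_n -> R) :
  \sum_i u i * v i <= Num.sqrt (\sum_i u i ^+ 2) * Num.sqrt (\sum_i v i ^+ 2).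
Proof.
rewrite -sqrtrM ?sum_sqr_ge0 //; apply: le_trans (ler_norm _) _.
rewrite -sqrtr_sqr ler_sqrt ?mulr_ge0 ?sum_sqr_ge0 //.
rewrite -(ler_pM2l (ltr0n R 2)) -subr_ge0.
have mulr_sum_sum (x y : 'I_n -> R) :
    (\sum_i x i) * (\sum_j y j) = \sum_i \sum_j x i * y j.
  by rewrite mulr_suml; apply: eq_bigr => i _; rewrite mulr_sumr.
have lagrange : \sum_i \sum_j (u i * v j - u j * v i) ^+ 2 =
    2 * ((\sum_i u i ^+ 2) * \sum_i v i ^+ 2) - 2 * (\sum_i u i * v i) ^+ 2.
  rewrite expr2 !mulr_sum_sum.
  transitivity (\sum_i \sum_j u i ^+ 2 * v j ^+ 2 + \sum_i \sum_j u j ^+ 2 * v i ^+ 2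
      - 2 * \sum_i \sum_j u i * v i * (u j * v j)).
    rewrite mulr_sumr -big_split -sumrB; apply: eq_bigr => i _.
    rewrite mulr_sumr -big_split -sumrB; apply: eq_bigr => j _ /=; ring.
  by rewrite [X in _ + X - _]exchange_big /=; ring.
by rewrite -lagrange; do 2!(apply: sumr_ge0 => ? _); exact: sqr_ge0.
Qed.

Lemma enorm_ge0 {n} (v : 'rV[R]_n) : 0 <= enorm v.
Proof. exact: sqrtr_ge0. Qed.

Lemma enorm0 {n} : enorm (0 : 'rV[R]_n) = 0.
Proof. by rewrite /enorm big1 ?sqrtr0 // => i _; rewrite mxE expr0n. Qed.

Lemma enormN {n} (v : 'rV[R]_n) : enorm (- v) = enorm v.
Proof. by congr Num.sqrt; apply: eq_bigr => i _; rewrite mxE sqrrN. Qed.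

Lemma enorm_distC {n} (u v : 'rV[R]_n) : enorm (u - v) = enorm (v - u).
Proof. by rewrite -enormN opprB. Qed.

Lemma enormD {n} (u v : 'rV[R]_n) : enorm (u + v) <= enorm u + enorm v.
Proof.
rewrite -[leRHS]ger0_norm ?addr_ge0 ?enorm_ge0 // -sqrtr_sqr ler_sqrt ?sqr_ge0 //.
rewrite sqrrD !sqr_sqrtr ?sum_sqr_ge0 //.
have -> : \sum_j (u + v) 0 j ^+ 2 =
    \sum_j u 0 j ^+ 2 + \sum_j v 0 j ^+ 2 + 2 * \sum_j u 0 j * v 0 j.
  rewrite mulr_sumr -!big_split; apply: eq_bigr => j _ /=; rewrite mxE; ring.
rewrite addrAC lerD2r lerD2l -[in leRHS]mulr_natl ler_pM2l //.
exact: cauchy_schwarz_sum.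
Qed.

Lemma enorm_distD {n} (x y z : 'rV[R]_n) :
  enorm (x - z) <= enorm (x - y) + enorm (y - z).
Proof. by have := enormD (x - y) (y - z); rewrite addrA subrK. Qed.

Lemma mxentry_le_enorm {n} (v : 'rV[R]_n) j : `|v 0 j| <= enorm v.
Proof.
rewrite -sqrtr_sqr ler_sqrt ?sum_sqr_ge0 //.
by rewrite (bigD1 j) //= lerDl; apply: sumr_ge0 => i _; exact: sqr_ge0.
Qed.

Lemma mx_norm_le_enorm {n} (v : 'rV[R]_n) : `|v| <= enorm v.
Proof.
change (mx_norm v <= enorm v); rewrite mx_normrE.
apply: bigmax_le => [|[i j] _]; first exact: enorm_ge0.
by rewrite (ord1 i); exact: mxentry_le_enorm.
Qed.

Lemma enorm_le_sum {n} (v : 'rV[R]_n) : enorm v <= \sum_j `|v 0 j|.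
Proof.
have sum_ge0 : 0 <= \sum_j `|v 0 j| by exact: sumr_ge0.
rewrite -[leRHS]ger0_norm // -sqrtr_sqr ler_sqrt ?sqr_ge0 //.
rewrite [leRHS]expr2 mulr_suml; apply: ler_sum => i _.
rewrite -real_normK ?num_real // expr2 ler_wpM2l //.
by rewrite (bigD1 i) //= lerDl; exact: sumr_ge0.
Qed.

Lemma enorm_lt_entries {n} (v : 'rV[R]_n) (r : R) : 0 < r ->
  (forall j, `|v 0 j| <= r / (n%:R + 1)) -> enorm v < r.
Proof.
move=> r_gt0 v_le; have n1_gt0 : 0 < n%:R + 1 :> R by rewrite ltr_wpDl.
apply: le_lt_trans (enorm_le_sum v) _.
apply: (@le_lt_trans _ _ (\sum_(j < n) r / (n%:R + 1))).
  by apply: ler_sum => j _; exact: v_le.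
rewrite sumr_const card_ord -[_ *+ n]mulr_natr mulrAC ltr_pdivrMr // ltr_pM2l //.
by rewrite ltrDl.
Qed.

Lemma enorm_lt_ball {n} (v w : 'rV[R]_n) (r : R) : 0 < r ->
  ball v (r / (n%:R + 1)) w -> enorm (v - w) < r.
Proof.
rewrite -ball_normE /= => r_gt0 vw; apply: enorm_lt_entries => // j.
exact: ltW (le_lt_trans (mxentry_norm_le _ _ _) vw).
Qed.

Lemma norm_sum_mul_le {d N} (B : 'rV[R]_d) (Z : 'M[R]_(N, d)) i :
  `|\sum_j B 0 j * Z i j| <= d%:R * (`|B| * `|Z|).
Proof.
apply: le_trans (ler_norm_sum _ _ _) _.
apply: (@le_trans _ _ (\sum_(j < d) `|B| * `|Z|)).
  by apply: ler_sum => j _; rewrite normrM ler_pM // mxentry_norm_le.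
by rewrite sumr_const card_ord mulr_natl.
Qed.

End EuclideanNorm.

Section Neighbourhoods.
Context {R : realType} {n : nat}.
Implicit Types (S : set 'rV[R]_n) (e : R).

Definition sub_enbhd S1 S2 e :=
  forall y, S1 y -> exists2 y', S2 y' & enorm (y - y') < e.

Lemma subset_sub_enbhd {S1 S2 e} : 0 < e -> S1 `<=` S2 -> sub_enbhd S1 S2 e.
Proof. by move=> e_gt0 S12 y S1y; exists y; rewrite ?subrr ?enorm0 //; exact: S12. Qed.

Lemma sub_enbhdSl S1 S1' S2 e :
  S1' `<=` S1 -> sub_enbhd S1 S2 e -> sub_enbhd S1' S2 e.
Proof. by move=> S11' S12 y /S11'; exact: S12. Qed.

Lemma sub_enbhd_trans S1 S2 S3 e1 e2 :
  sub_enbhd S1 S2 e1 -> sub_enbhd S2 S3 e2 -> sub_enbhd S1 S3 (e1 + e2).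
Proof.
move=> S12 S23 y /S12[y' /S23[y'' S3y'' y'y''] yy']; exists y'' => //.
exact: le_lt_trans (enorm_distD y y' y'') (ltrD yy' y'y'').
Qed.

Lemma not_sub_enbhd S1 S2 e : ~ sub_enbhd S1 S2 e ->
  exists2 y, S1 y & forall y', S2 y' -> e <= enorm (y - y').
Proof.
move=> /existsNP[y /not_implyP[S1y far]]; exists y => // y' S2y'.
by rewrite leNgt; apply/negP => close; apply: far; exists y'.
Qed.

Lemma hausdorff_lt_sub_enbhd {S1 S2 e} : (hausdorff S1 S2 < e%:E)%E ->
  sub_enbhd S1 S2 e /\ sub_enbhd S2 S1 e.
Proof.
have dist_lt S S' y : S y ->
    (ereal_sup ([set 0%E] `|` [set dist_pt z S' | z in S]) < e%:E)%E ->
    exists2 y', S' y' & enorm (y - y') < e.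
  move=> Sy sup_lt; have : (dist_pt y S' < e%:E)%E.
    by apply: le_lt_trans sup_lt; apply: ereal_sup_ubound; right; exists y.
  by move=> /ereal_inf_lt[_ [y' S'y' <-]]; rewrite lte_fin; exists y'.
rewrite /hausdorff gt_max => /andP[lt12 lt21].
by split => y Sy; [exact: (dist_lt S1) | exact: (dist_lt S2)].
Qed.

Lemma hausdorff_le_sub_enbhd S1 S2 e : 0 <= e ->
  sub_enbhd S1 S2 e -> sub_enbhd S2 S1 e -> (hausdorff S1 S2 <= e%:E)%E.
Proof.
move=> e_ge0 S12 S21.
have dist_le S S' : sub_enbhd S S' e ->
    (ereal_sup ([set 0%E] `|` [set dist_pt z S' | z in S]) <= e%:E)%E.
  move=> SS'; apply/ereal_supP => _ [->|[y /SS'[y' S'y' yy'] <-]]; rewrite ?lee_fin //.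
  by apply: ge_ereal_inf; exists (enorm (y - y'))%:E; [exists y' | rewrite lee_fin ltW].
by rewrite /hausdorff ge_max !dist_le.
Qed.

End Neighbourhoods.

Lemma compact_decreasing_cluster {R : realType} {X : topologicalType}
    {B : set X} {S : R -> set X} :
  compact B -> (forall e, 0 < e -> S e !=set0) ->
  (forall e e', 0 < e -> e <= e' -> S e `<=` S e') -> S 1 `<=` B ->
  exists2 p, B p & forall e U, 0 < e -> nbhs p U -> S e `&` U !=set0.
Proof.
move=> cB S_nonempty S_mono S1B.
pose F := filter_from [set e : R | 0 < e] S.
have F_filter : ProperFilter F.
  apply: filter_from_proper; last exact: S_nonempty.
  apply: filter_from_filter; first by exists 1 => /=.
  move=> e e' /= e_gt0 e'_gt0; exists (Num.min e e'); first by rewrite /= lt_min e_gt0.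
  by move=> y Sy; split; apply: S_mono Sy; rewrite ?lt_min ?e_gt0 ?ge_min ?lexx ?orbT.
have [p [Bp p_cluster]] := cB F F_filter (ex_intro2 _ _ 1 ltr01 S1B).
by exists p => // e U e_gt0 pU; apply: p_cluster => //; exists e.
Qed.

Lemma compact_closed_ball_rV {R : realType} {n} (M : R) :
  compact (closed_ball_ Num.norm (0 : 'rV[R]_n) M).
Proof.
apply: bounded_closed_compact; last exact: closed_closed_ball_.
exists M; split; first exact: num_real.
move=> r Mr y; rewrite /closed_ball_ /= sub0r normrN => yM.
exact: le_trans yM (ltW Mr).
Qed.

Lemma ball_triple {R : realType} {U V W : normedModType R} (p q : U * V * W) r :
  ball p r q -> [/\ `|p.1.1 - q.1.1| < r, `|p.1.2 - q.1.2| < r & `|p.2 - q.2| < r].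
Proof. by case=> [[]]; rewrite -!ball_normE. Qed.

Lemma compact_snd_bounded {R : realType} {U V : normedModType R}
    {K : set (U * V)} :
  compact K -> exists2 C, 0 <= C & forall p, K p -> `|p.2| <= C.
Proof.
move=> /compact_bounded[M [M_real KM]]; exists (`|M| + 1); first by rewrite addr_ge0.
move=> p Kp; have /KM/(_ p Kp) : M < `|M| + 1.
  by apply: le_lt_trans (real_ler_norm M_real) _; rewrite ltrDl.
by apply: le_trans; rewrite prod_normE le_max lexx orbT.
Qed.

Lemma cvge0_nonnegP {R : realType} {T} (F : set_system T) {FF : Filter F}
    (g : T -> \bar R) : (forall x, 0 <= g x)%E ->
  g @ F --> 0%E <-> forall e, 0 < e -> \forall x \near F, (g x < e%:E)%E.
Proof.
move=> g_ge0; split=> [g_cvg e e_gt0 | g_lt U].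
  exact: g_cvg _ (@nbhs_open_ereal_lt R 0 (fun=> e) e_gt0).
move=> /nbhs_EFin/nbhs_ballP[e /= e_gt0 eU]; apply: filterS (g_lt _ e_gt0) => x gx_lt.
have gx_fin : g x \is a fin_num by rewrite ge0_fin_numE // (lt_le_trans gx_lt) ?leey.
rewrite /preimage /= -(fineK gx_fin); apply: eU.
by rewrite -ball_normE /= sub0r normrN ger0_norm ?fine_ge0 // -lte_fin fineK.
Qed.

Section NestedSets.
Variables (R : realType) (n : nat) (S : R -> set 'rV[R]_n).
Hypothesis S_mono : forall e e' : R, 0 < e -> e <= e' -> S e `<=` S e'.
Hypothesis S_thick :
  forall (e : R) y y', 0 < e -> S e y' -> enorm (y - y') < e -> S (2 * e) y.
Hypothesis S1_bounded : exists M, forall y, S 1 y -> enorm y <= M.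

Lemma nested_sets_near_cap e : 0 < e ->
  exists2 eps, 0 < eps & sub_enbhd (S eps) [set y | forall e, 0 < e -> S e y] e.
Proof.
move=> e_gt0; set Scap := [set y | _]; apply: contrapT => no_eps.
pose far eps := [set y | S eps y /\ forall y', Scap y' -> e <= enorm (y - y')].
have far_nonempty eps : 0 < eps -> far eps !=set0.
  move=> eps_gt0; have [|y Sy y_far] := @not_sub_enbhd _ _ (S eps) Scap e.
    by move=> sub; apply: no_eps; exists eps.
  by exists y.
have far_mono eps eps' : 0 < eps -> eps <= eps' -> far eps `<=` far eps'.
  by move=> eps_gt0 le y [Sy y_far]; split => //; exact: S_mono Sy.
have [M SM] := S1_bounded.
have far1_ball : far 1 `<=` closed_ball_ Num.norm 0 M.
  move=> y [/SM yM _]; rewrite /closed_ball_ /= sub0r normrN.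
  exact: le_trans (mx_norm_le_enorm y) yM.
have [p _ p_cluster] := compact_decreasing_cluster
  (compact_closed_ball_rV M) far_nonempty far_mono far1_ball.
have far_near_p eps r : 0 < eps -> 0 < r -> exists y, far eps y /\ enorm (p - y) < r.
  move=> eps_gt0 r_gt0; have rn_gt0 : 0 < r / (n%:R + 1) by rewrite divr_gt0 ?ltr_wpDl.
  have [y [far_y p_y]] := p_cluster eps _ eps_gt0 (nbhsx_ballx p _ rn_gt0).
  by exists y; split => //; exact: enorm_lt_ball.
have Scap_p : Scap p.
  move=> e' e'_gt0; have e'2_gt0 : 0 < e' / 2 by rewrite divr_gt0.
  have [y [[Sy _] p_y]] := far_near_p _ _ e'2_gt0 e'2_gt0.
  by have := S_thick _ _ _ e'2_gt0 Sy p_y; rewrite mulrC divfK ?pnatr_eq0.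
have [y [[_ y_far] p_y]] := far_near_p _ _ ltr01 e_gt0.
by have := y_far p Scap_p; rewrite enorm_distC leNgt p_y.
Qed.

End NestedSets.

Section Game.
Context {R : realType} {d N : nat} {T : R} {k : 'I_N -> nat}.
Context {A : forall i : 'I_N, set 'rV[R]_(k i)}.
Context {b : R -> 'rV[R]_d -> @profile R N k -> 'rV[R]_d}
        {f : R -> 'rV[R]_d -> @profile R N k -> 'rV[R]_N}.

Local Notation hi := (hi b f).
Local Notation hvec := (hvec b f).
Local Notation Eeps := (Eeps b f A).
Local Notation Heps := (Heps b f A).
Local Notation Hset := (Hset b f A).

Lemma in_A_repl {a : @profile R N k} {i} {ai : 'rV[R]_(k i)} :
  in_A A a -> A i ai -> in_A A (repl a ai).
Proof.
move=> Aa Aai j; rewrite /repl; have [<-|ij] := eqVneq i j.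
  by rewrite dfwithin.
by rewrite dfwithout.
Qed.

Lemma Eeps_mono e e' th : e <= e' -> Eeps e th `<=` Eeps e' th.
Proof.
move=> le_ee' a [Aa a_eq]; split => // i ai Aai.
by apply: le_trans (a_eq i ai Aai); rewrite lerD2l lerN2.
Qed.

Lemma Heps_mono e e' th : e <= e' -> Heps e th `<=` Heps e' th.
Proof.
move=> le_ee' y [a Ea y_a]; exists a; first exact: Eeps_mono Ea.
exact: lt_le_trans y_a le_ee'.
Qed.

Lemma Hset_sub_Heps {e th} : 0 < e -> Hset th `<=` Heps e th.
Proof. by move=> e_gt0 y /(_ e e_gt0). Qed.

Lemma Heps_thick e th y y' :
  0 < e -> Heps e th y' -> enorm (y - y') < e -> Heps (2 * e) th y.
Proof.
move=> e_gt0 [a Ea y'_a] y_y'; exists a.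
  by apply: Eeps_mono Ea; rewrite ler_peMl ?ltW // ltr1n.
apply: le_lt_trans (enorm_distD y y' _) _.
by rewrite mulr_natl mulr2n ltrD.
Qed.

Definition h_close eta th th' :=
  forall a, in_A A a -> enorm (hvec th a - hvec th' a) < eta.

Lemma h_closeC {eta th th'} : h_close eta th th' -> h_close eta th' th.
Proof. by move=> close a Aa; rewrite enorm_distC; exact: close. Qed.

Lemma h_close_hi {eta th th' a} i : h_close eta th th' -> in_A A a ->
  `|hi i th a - hi i th' a| < eta.
Proof.
move=> close Aa; apply: le_lt_trans (close a Aa).
by have := mxentry_le_enorm (hvec th a - hvec th' a) i; rewrite !mxE.
Qed.

Lemma Eeps_close eta e th th' : h_close eta th th' ->
  Eeps e th `<=` Eeps (e + 2 * eta) th'.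
Proof.
move=> close a [Aa a_eq]; split => // i ai Aai.
have := a_eq i ai Aai.
have := h_close_hi i close (in_A_repl Aa Aai); have := h_close_hi i close Aa.
rewrite !ltr_norml; lra.
Qed.

Lemma Heps_close {eta e th th'} : 0 < eta -> h_close eta th th' ->
  Heps e th `<=` Heps (e + 2 * eta) th'.
Proof.
move=> eta_gt0 close y [a Ea y_a]; exists a; first exact: Eeps_close Ea.
apply: le_lt_trans (enorm_distD y (hvec th a) _) _.
have := close a Ea.1; lra.
Qed.

Lemma unif_cont_on_dom_profile {V : normedModType R}
    {F : R -> 'rV[R]_d -> @profile R N k -> V} :
  unif_cont_on_dom T A F -> forall e, 0 < e -> exists2 del, 0 < del &
    forall t t' x x' a, 0 <= t <= T -> 0 <= t' <= T -> in_A A a ->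
      `|t - t'| < del -> `|x - x'| < del -> `|F t x a - F t' x' a| < e.
Proof.
move=> F_unif e e_gt0; have [del del_gt0 F_del] := F_unif e e_gt0.
exists del => // t t' x x' a t_T t'_T Aa tt' xx'.
by apply: F_del => // i; rewrite subrr normr0.
Qed.

(* Since H(th) is contained in every H_eps(th), only the distance from H_eps(th)
   to H(th) is informative in rho_K. *)
Definition Heps_unif_cvg (K : set (state R d N)) := forall e, 0 < e ->
  \forall eps \near 0^'+, forall th, K th -> sub_enbhd (Heps eps th) (Hset th) e.

Lemma rhoK_ge0 K eps : (0 <= rhoK b f A K eps)%E.
Proof. by apply: ereal_sup_ubound; left. Qed.

Lemma hausdorff_le_rhoK {K eps th} : K th ->
  (hausdorff (Heps eps th) (Hset th) <= rhoK b f A K eps)%E.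
Proof. by move=> Kth; apply: ereal_sup_ubound; right; exists th. Qed.

Lemma rhoK_le K eps x : (0 <= x)%E ->
  (forall th, K th -> hausdorff (Heps eps th) (Hset th) <= x)%E ->
  (rhoK b f A K eps <= x)%E.
Proof. by move=> x_ge0 Kx; apply/ereal_supP => _ [->|[th Kth <-]] //; exact: Kx. Qed.

Lemma rhoK_cvg0P K :
  rhoK b f A K eps @[eps --> 0^'+] --> 0%E <-> Heps_unif_cvg K.
Proof.
rewrite cvge0_nonnegP; last exact: rhoK_ge0.
split=> H e e_gt0.
  apply: filterS (H e e_gt0) => eps rho_lt th Kth.
  exact: (hausdorff_lt_sub_enbhd (le_lt_trans (hausdorff_le_rhoK Kth) rho_lt)).1.
have e2_gt0 : 0 < e / 2 by rewrite divr_gt0.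
apply: filterS2 (nbhs_right_gt 0) (H _ e2_gt0) => eps eps_gt0 H_near.
apply: (@le_lt_trans _ _ (e / 2)%:E); last by rewrite lte_fin; lra.
apply: rhoK_le; first by rewrite lee_fin ltW.
move=> th Kth; apply: hausdorff_le_sub_enbhd; first exact: ltW.
  exact: H_near.
exact: subset_sub_enbhd e2_gt0 (Hset_sub_Heps eps_gt0).
Qed.

Hypotheses (b_bounded : bounded_on_dom T A b) (f_bounded : bounded_on_dom T A f).
Hypotheses (b_unif : unif_cont_on_dom T A b) (f_unif : unif_cont_on_dom T A f).

Lemma hvec_bounded {th} : Xset d N T th ->
  exists M, forall a, in_A A a -> enorm (hvec th a) <= M.
Proof.
move=> Xth; have [Mf fM] := f_bounded; have [Mb bM] := b_bounded.
exists (N%:R * (Mf + d%:R * (Mb * `|th.2|))) => a Aa.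
apply: le_trans (enorm_le_sum _) _.
apply: (@le_trans _ _ (\sum_(i < N) (Mf + d%:R * (Mb * `|th.2|)))); last first.
  by rewrite sumr_const card_ord [leRHS]mulr_natl.
apply: ler_sum => i _; rewrite mxE /Defs.hi.
apply: le_trans (ler_normD _ _) _; apply: lerD.
  exact: le_trans (mxentry_norm_le _ _ _) (fM _ _ _ Xth Aa).
apply: le_trans (norm_sum_mul_le _ _ _) _.
by rewrite ler_wpM2l // ler_wpM2r // bM.
Qed.

Lemma hi_equicont {C eta : R} : 0 <= C -> 0 < eta -> exists2 del, 0 < del &
  forall th th' a i, Xset d N T th -> Xset d N T th' -> `|th.2| <= C ->
    in_A A a -> ball th del th' -> `|hi i th a - hi i th' a| < eta.
Proof.
move=> C_ge0 eta_gt0; have [Mb bM] := b_bounded.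
pose L := 1 + d%:R * (C + `|Mb|).
have L_gt0 : 0 < L by rewrite ltr_pwDl // mulr_ge0 // addr_ge0.
pose r := eta / L; have r_gt0 : 0 < r by rewrite divr_gt0.
have [delf delf_gt0 f_r] := unif_cont_on_dom_profile f_unif _ r_gt0.
have [delb delb_gt0 b_r] := unif_cont_on_dom_profile b_unif _ r_gt0.
exists (Num.min delf (Num.min delb r)) => [|th th' a i Xth Xth' thC Aa].
  by rewrite !lt_min delf_gt0 delb_gt0 r_gt0.
case/ball_triple; rewrite !lt_min => /and3P[tf tb _] /and3P[xf xb _] /and3P[_ _ zr].
set F := f th.1.1 th.1.2 a; set F' := f th'.1.1 th'.1.2 a.
set B := b th.1.1 th.1.2 a; set B' := b th'.1.1 th'.1.2 a.
have -> : hi i th a - hi i th' a = (F - F') 0 i +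
    \sum_j (B - B') 0 j * th.2 i j + \sum_j B' 0 j * (th.2 - th'.2) i j.
  have sum_split : \sum_j B 0 j * th.2 i j - \sum_j B' 0 j * th'.2 i j =
      \sum_j (B - B') 0 j * th.2 i j + \sum_j B' 0 j * (th.2 - th'.2) i j.
    by rewrite -sumrB -big_split; apply: eq_bigr => j _ /=; rewrite !mxE; ring.
  by rewrite -addrA -sum_split /Defs.hi -/F -/F' -/B -/B' !mxE; ring.
have F_lt : `|(F - F') 0 i| < r.
  exact: le_lt_trans (mxentry_norm_le _ _ _) (f_r _ _ _ _ _ Xth Xth' Aa tf xf).
have BZ_le : `|\sum_j (B - B') 0 j * th.2 i j| <= d%:R * (r * C).
  apply: le_trans (norm_sum_mul_le _ _ _) _.
  by rewrite ler_wpM2l // ler_pM // ltW // b_r.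
have B'Z_le : `|\sum_j B' 0 j * (th.2 - th'.2) i j| <= d%:R * (`|Mb| * r).
  apply: le_trans (norm_sum_mul_le _ _ _) _.
  rewrite ler_wpM2l //; apply: ler_pM => //; last exact: ltW.
  exact: le_trans (bM _ _ _ Xth' Aa) (ler_norm _).
have -> : eta = r + d%:R * (r * C) + d%:R * (`|Mb| * r).
  by rewrite /r /L; field; rewrite -/L gt_eqF.
have := ler_normD ((F - F') 0 i + \sum_j (B - B') 0 j * th.2 i j)
  (\sum_j B' 0 j * (th.2 - th'.2) i j).
have := ler_normD ((F - F') 0 i) (\sum_j (B - B') 0 j * th.2 i j).
lra.
Qed.

Lemma h_close_near {C eta : R} : 0 <= C -> 0 < eta -> exists2 del, 0 < del &
  forall th th', Xset d N T th -> Xset d N T th' -> `|th.2| <= C ->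
    ball th del th' -> h_close eta th th'.
Proof.
move=> C_ge0 eta_gt0.
have etaN_gt0 : 0 < eta / (N%:R + 1) by rewrite divr_gt0 ?ltr_wpDl.
have [del del_gt0 hi_near] := hi_equicont C_ge0 etaN_gt0.
exists del => // th th' Xth Xth' thC th_th' a Aa.
by apply: enorm_lt_entries => // i; rewrite !mxE; apply/ltW/hi_near.
Qed.

Lemma Heps_near_Hset {th} : Xset d N T th -> forall e, 0 < e ->
  exists2 eps, 0 < eps & sub_enbhd (Heps eps th) (Hset th) e.
Proof.
move=> Xth; apply: nested_sets_near_cap.
- by move=> e e' _; exact: Heps_mono.
- by move=> e y y'; exact: Heps_thick.
have [M hM] := hvec_bounded Xth; exists (M + 1) => y [a [Aa _] y_a].
have := enormD (hvec th a) (y - hvec th a); rewrite addrC subrK.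
have := hM a Aa; lra.
Qed.

Context {K : set (state R d N)}.
Hypotheses (K_compact : compact K) (KX : K `<=` Xset d N T).

Lemma Hd_unif_cont_of_Heps_unif_cvg : Heps_unif_cvg K -> Hd_unif_cont_on Hset K.
Proof.
move=> cvgH e e_gt0; have e2_gt0 : 0 < e / 2 by rewrite divr_gt0.
have [eps [eps_gt0 H_near]] : exists eps, 0 < eps /\
    forall th, K th -> sub_enbhd (Heps eps th) (Hset th) (e / 2).
  apply: (@filter_ex _ (0 : R)^'+).
  by apply: filterS2 (nbhs_right_gt 0) (cvgH _ e2_gt0) => eps; split.
have [C C_ge0 KC] := compact_snd_bounded K_compact.
have eta_gt0 : 0 < eps / 3 by rewrite divr_gt0.
have [del del_gt0 close] := h_close_near C_ge0 eta_gt0.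
exists del => // th th' Kth Kth' th_th'.
have Hset_near p q : h_close (eps / 3) p q -> K q ->
    sub_enbhd (Hset p) (Hset q) (e / 2).
  move=> pq Kq; apply: sub_enbhdSl (H_near q Kq) => y /(Hset_sub_Heps eta_gt0).
  by move/(Heps_close eta_gt0 pq); apply: Heps_mono; lra.
have th_th'_close := close th th' (KX _ Kth) (KX _ Kth') (KC th Kth) th_th'.
apply: (@le_lt_trans _ _ (e / 2)%:E); last by rewrite lte_fin; lra.
apply: hausdorff_le_sub_enbhd; first exact: ltW.
  exact: Hset_near _ _ th_th'_close Kth'.
exact: Hset_near _ _ (h_closeC th_th'_close) Kth.
Qed.

Lemma Heps_near_Hset_locally : Hd_unif_cont_on Hset K -> forall p e, K p -> 0 < e ->
  exists2 es, 0 < es & exists2 del, 0 < del & forall th eps, K th ->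
    ball p del th -> 0 < eps < es -> sub_enbhd (Heps eps th) (Hset th) e.
Proof.
move=> Hcont p e Kp e_gt0; have e2_gt0 : 0 < e / 2 by rewrite divr_gt0.
have [es es_gt0 p_near] := Heps_near_Hset (KX _ Kp) _ e2_gt0.
have [C C_ge0 KC] := compact_snd_bounded K_compact.
have [del1 del1_gt0 Hd] := Hcont _ e2_gt0.
have es3_gt0 : 0 < es / 3 by rewrite divr_gt0.
have [del2 del2_gt0 close] := h_close_near C_ge0 es3_gt0.
exists (es / 3) => //; exists (Num.min del1 del2); first by rewrite lt_min del1_gt0.
move=> th eps Kth p_th /andP[eps_gt0 eps_lt].
have p_th_close : h_close (es / 3) th p.
  apply/h_closeC/(close p th (KX _ Kp) (KX _ Kth) (KC p Kp)).
  by apply: le_ball p_th; rewrite ge_min lexx orbT.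
rewrite [e]splitr.
apply: sub_enbhd_trans (hausdorff_lt_sub_enbhd (Hd p th Kp Kth _)).1; last first.
  by apply: le_ball p_th; rewrite ge_min lexx.
apply: sub_enbhdSl p_near => y /(Heps_close es3_gt0 p_th_close).
by apply: Heps_mono; lra.
Qed.

Lemma Heps_unif_cvg_of_Hd_unif_cont : Hd_unif_cont_on Hset K -> Heps_unif_cvg K.
Proof.
move=> Hcont e e_gt0.
suff [eps0 eps0_gt0 good] : exists2 eps0, 0 < eps0 & forall eps, 0 < eps < eps0 ->
    forall th, K th -> sub_enbhd (Heps eps th) (Hset th) e.
  apply: filterS2 (nbhs_right_gt 0) (nbhs_right_lt eps0_gt0) => eps eps_gt0 eps_lt.
  by apply: good; rewrite eps_gt0.
apply: contrapT => no_eps0.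
pose bad eps0 := [set th | K th /\
  exists2 eps, 0 < eps < eps0 & ~ sub_enbhd (Heps eps th) (Hset th) e].
have bad_nonempty eps0 : 0 < eps0 -> bad eps0 !=set0.
  move=> eps0_gt0; apply: contrapT => bad_empty; apply: no_eps0.
  exists eps0 => // eps eps_range th Kth; apply: contrapT => not_sub.
  by apply: bad_empty; exists th; split => //; exists eps.
have bad_mono eps0 eps0' : 0 < eps0 -> eps0 <= eps0' -> bad eps0 `<=` bad eps0'.
  move=> _ le th [Kth [eps /andP[eps_gt0 eps_lt] not_sub]]; split => //.
  by exists eps => //; rewrite eps_gt0 (lt_le_trans eps_lt le).
have [p Kp p_cluster] :=
  compact_decreasing_cluster K_compact bad_nonempty bad_mono (fun th => @proj1 _ _).
have [es es_gt0 [del del_gt0 p_good]] := Heps_near_Hset_locally Hcont _ _ Kp e_gt0.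
have [th [[Kth [eps eps_range not_sub]] p_th]] :=
  p_cluster _ _ es_gt0 (nbhsx_ballx p _ del_gt0).
exact: not_sub (p_good th eps Kth p_th eps_range).
Qed.

End Game.

Theorem proposition3p1 (R : realType) (d N : nat) (T : R) (k : 'I_N -> nat)
  (A : forall i : 'I_N, set 'rV[R]_(k i))
  (b : R -> 'rV[R]_d -> profile k -> 'rV[R]_d)
  (f : R -> 'rV[R]_d -> profile k -> 'rV[R]_N)
  (g : 'rV[R]_d -> 'rV[R]_N) :
  (0 < d)%N -> (0 < N)%N -> 0 < T ->
  (forall i, open (A i) /\ connected (A i) /\ A i !=set0) ->
  bounded_on_dom T A b -> unif_cont_on_dom T A b ->
  bounded_on_dom T A f -> unif_cont_on_dom T A f ->
  (exists M : R, forall x, `|g x| <= M) ->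
  (forall e : R, 0 < e -> exists2 del : R, 0 < del &
     forall x x', `|x - x'| < del -> `|g x - g x'| < e) ->
  forall K : set (state R d N), compact K -> K `<=` Xset d N T ->
    (rhoK b f A K eps @[eps --> 0^'+] --> 0%E) <->
    Hd_unif_cont_on (Hset b f A) K.
Proof.
move=> _ _ _ _ b_bounded b_unif f_bounded f_unif _ _ K K_compact KX.
rewrite rhoK_cvg0P; split.
  exact: (Hd_unif_cont_of_Heps_unif_cvg b_bounded b_unif f_unif K_compact KX).
exact: (Heps_unif_cvg_of_Hd_unif_cont b_bounded f_bounded b_unif f_unif K_compact KX).
Qed.
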